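(* Let $\rho$ be a left-c.e. semi-measure. Then $X\in2^\omega$ is weakly 2-random for $\rho$ (i.e., $X\in\mathsf{W2R}_\rho$) if and only if $X$ is blindly weakly 2-random for $\overline\rho$.
   Context: $2^{<\omega}$ is the set of finite binary strings, $\varepsilon$ the empty string, $[\![\sigma]\!]=\{X\in2^\omega:\sigma\preceq X\}$, $[\![S]\!]=\bigcup_{\sigma\in S}[\![\sigma]\!]$. A semi-measure is $\rho:2^{<\omega}\to[0,1]$ with $\rho(\varepsilon)=1$ and $\rho(\sigma)\ge\rho(\sigma0)+\rho(\sigma1)$; left-c.e. means its values are uniformly approximable from below by computable non-decreasing rational sequences. For $E\subseteq2^{<\omega}$, $\rho(E)=\sum_{\sigma\in E}\rho(\sigma)$. $X\in\mathsf{W2R}_\rho$ iff $X\notin\bigcap_i[\![U_i]\!]$ for every uniformly c.e. sequence $(U_i)$ of subsets of $2^{<\omega}$ with $\lim_i\rho(U_i)=0$. $\overline\rho(\sigma)=\inf_{n\ge|\sigma|}\sum_{\tau\succeq\sigma,\,|\tau|=n}\rho(\tau)$, which determines a Borel measure $\overline\rho$ on $2^\omega$ (of total mass possibly less than 1). $X$ is blindly weakly 2-random for $\overline\rho$ iff $X\notin\bigcap_i\mathcal U_i$ for every uniformly effectively open (uniformly $\Sigma^0_1$) sequence $(\mathcal U_i)$ of subsets of $2^\omega$ with $\lim_i\overline\rho(\mathcal U_i)=0$. *)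

From HB Require Import structures.
From mathcomp Require Import all_boot all_order all_algebra.
From mathcomp Require Import all_classical all_reals all_analysis.
Set Implicit Arguments. Unset Strict Implicit. Unset Printing Implicit Defensive.
Import Order.TTheory GRing.Theory Num.Theory.
Import numFieldNormedType.Exports.
Local Open Scope classical_set_scope.
Local Open Scope ring_scope.

Definition npair (x y : nat) : nat := ((x + y) * (x + y).+1) %/ 2 + y.

(* its inverse, enumerating the diagonals (d,0),(d-1,1),...,(0,d) *)
Fixpoint nunpair (n : nat) : nat * nat :=
  match n with
  | 0 => (0, 0)
  | n'.+1 => let: (x, y) := nunpair n' in
             match x with 0 => (y.+1, 0) | x'.+1 => (x', y.+1) end
  end.

(* bijective base-2 coding of finite binary strings (seq bool) into nat *)
Fixpoint scode (s : seq bool) : nat :=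
  match s with
  | [::] => 0
  | b :: s' => (scode s').*2 + (if b then 2 else 1)
  end.

Inductive prf : Type :=
| PZero | PSucc | PId | PFst | PSnd
| PComp of prf & prf
| PPair of prf & prf
| PRec of prf & prf
| PMu of prf.

Inductive peval : prf -> nat -> nat -> Prop :=
| ev_zero x : peval PZero x 0
| ev_succ x : peval PSucc x x.+1
| ev_id x : peval PId x x
| ev_fst x : peval PFst x (nunpair x).1
| ev_snd x : peval PSnd x (nunpair x).2
| ev_comp f g x y z : peval g x y -> peval f y z -> peval (PComp f g) x z
| ev_pair f g x y z : peval f x y -> peval g x z -> peval (PPair f g) x (npair y z)
| ev_rec0 f g x a y : nunpair x = (a, 0) -> peval f a y -> peval (PRec f g) x y
| ev_recS f g x a n y z : nunpair x = (a, n.+1) ->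
    peval (PRec f g) (npair a n) y -> peval g (npair a (npair n y)) z ->
    peval (PRec f g) x z
| ev_mu f x n : peval f (npair x n) 0 ->
    (forall m, (m < n)%N -> exists k, peval f (npair x m) k.+1) ->
    peval (PMu f) x n.

Definition computable (h : nat -> nat) : Prop :=
  exists p : prf, forall x, peval p x (h x).

Definition unif_ce (U : nat -> set (seq bool)) : Prop :=
  exists p : prf, forall i s, U i s <-> exists y, peval p (npair i (scode s)) y.

Definition cantor := nat -> bool.

Definition cyl (s : seq bool) : set cantor :=
  [set X | forall i, (i < size s)%N -> X i = nth false s i].

Definition cylS (S : set (seq bool)) : set cantor := \bigcup_(s in S) cyl s.

Definition unif_sigma01 (V : nat -> set cantor) : Prop :=
  exists U, unif_ce U /\ forall i, V i = cylS (U i).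

Definition cylinders : set (set cantor) := [set A | exists s, A = cyl s].
Definition cantorB := g_sigma_algebraType cylinders.

Section SemiMeasure.
Variable R : realType.

Definition semi_measure (rho : seq bool -> R) : Prop :=
  (forall s, 0 <= rho s <= 1) /\ rho [::] = 1 /\
  (forall s, rho (rcons s false) + rho (rcons s true) <= rho s).

Definition decQ (m : nat) : R :=
  let: (a, r) := nunpair m in let: (b, c) := nunpair r in
  (a%:R - b%:R) / (c.+1)%:R.

Definition left_ce (rho : seq bool -> R) : Prop :=
  exists h : nat -> nat, computable h /\
    forall s, (forall n, decQ (h (npair (scode s) n)) <= decQ (h (npair (scode s) n.+1)))
      /\ ((fun n : nat => decQ (h (npair (scode s) n))) : R^nat) @ \oo --> (rho s : R).

Definition rho_set (rho : seq bool -> R) (E : set (seq bool)) : \bar R :=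
  (\esum_(s in E) (rho s)%:E)%E.

Definition rho_bar (rho : seq bool -> R) (s : seq bool) : R :=
  inf [set (\sum_(t : k.-tuple bool) rho (s ++ tval t)) | k in [set: nat]].

Definition W2R (rho : seq bool -> R) (X : cantor) : Prop :=
  forall U : nat -> set (seq bool), unif_ce U ->
    (fun i => rho_set rho (U i)) @ \oo --> 0%E ->
    ~ (forall i, cylS (U i) X).

Definition blind_W2R (mu : {measure set cantorB -> \bar R}) (X : cantor) : Prop :=
  forall V : nat -> set cantor, unif_sigma01 V ->
    (fun i => mu (V i)) @ \oo --> 0%E ->
    ~ (forall i, V i X).

End SemiMeasure.

From HB Require Import structures.
From mathcomp Require Import all_boot all_order all_algebra.
From mathcomp Require Import all_classical all_reals all_analysis.
From mathcomp Require Import zify lra.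
Import Order.TTheory GRing.Theory Num.Theory numFieldNormedType.Exports.
Set Implicit Arguments. Unset Strict Implicit. Unset Printing Implicit Defensive.

(* Since mu([[U]]) <= rho(U) for every set of strings U, a weak 2-test for rho
   yields a blind test for mu, so blind randomness implies W2R_rho. Conversely,
   let (V_m) be a uniformly Sigma^0_1 blind test. Replace V_m by the set U'_m of
   minimal strings of length at least m that enter V_0, ..., V_m. It is
   uniformly c.e., covers the intersection of the V_k, and is an antichain of
   strings of length at least m inside V_m; splitting the masses of the strings
   of length m down the tree, which stops at U'_m, gives
     rho(U'_m) + mu(2^omega \ V_m) <= sum_{|t| = m} rho(t),
   so rho(U'_m) <= (sum_{|t| = m} rho(t) - rho_bar(empty)) + mu(V_m) -> 0. *)

(** * Cantor pairing *)

Definition tri d := (d * d.+1) %/ 2.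

Lemma triS d : tri d.+1 = tri d + d.+1.
Proof.
rewrite /tri.
have -> : d.+1 * d.+2 = d.+1 * 2 + d * d.+1 by nia.
by rewrite divnMDl // addnC.
Qed.

Lemma npairE x y : npair x y = tri (x + y) + y. Proof. by []. Qed.

Definition nunpair_next (p : nat * nat) := let: (x, y) := p in
  match x with 0 => (y.+1, 0) | x'.+1 => (x', y.+1) end.

Lemma nunpairS n : nunpair n.+1 = nunpair_next (nunpair n).
Proof. by rewrite /=; case: (nunpair n). Qed.

Lemma nunpair_npair x y : nunpair (npair x y) = (x, y).
Proof.
suff H n : forall x y, npair x y = n -> nunpair n = (x, y) by exact: H.
elim: n => [|n IH] {}x {}y.
  rewrite npairE; case: y => [|y]; last by rewrite addnS.
  by case: x => [|x] //; rewrite addn0 triS addnS.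
rewrite npairE; case: y => [|y] E.
  case: x E => [|x] E //.
  rewrite nunpairS (IH 0 x) // npairE add0n.
  by move: E; rewrite !addn0 triS; lia.
rewrite nunpairS (IH x.+1 y) // npairE.
by move: E; rewrite !addSn !addnS; lia.
Qed.

Notation nfst x := (nunpair x).1.
Notation nsnd x := (nunpair x).2.

Lemma nfst_pair x y : nfst (npair x y) = x. Proof. by rewrite nunpair_npair. Qed.
Lemma nsnd_pair x y : nsnd (npair x y) = y. Proof. by rewrite nunpair_npair. Qed.

(** * Closure properties of computable functions *)

Lemma computable_ext f g : (forall x, f x = g x) -> computable f -> computable g.
Proof. by move=> E [p Hp]; exists p => x; rewrite -E. Qed.

Lemma computable_id : computable (fun x => x).
Proof. by exists PId => x; constructor. Qed.

Lemma computable_comp f g :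
  computable f -> computable g -> computable (fun x => f (g x)).
Proof. by move=> [p Hp] [q Hq]; exists (PComp p q) => x; econstructor. Qed.

Lemma computable_succ f : computable f -> computable (fun x => (f x).+1).
Proof. by apply: (computable_comp (f := S)); exists PSucc => x; constructor. Qed.

Lemma computable_nfst f : computable f -> computable (fun x => nfst (f x)).
Proof.
by apply: (computable_comp (f := fun x => nfst x)); exists PFst => x; constructor.
Qed.

Lemma computable_nsnd f : computable f -> computable (fun x => nsnd (f x)).
Proof.
by apply: (computable_comp (f := fun x => nsnd x)); exists PSnd => x; constructor.
Qed.

Lemma computable_npair f g :
  computable f -> computable g -> computable (fun x => npair (f x) (g x)).
Proof. by move=> [p Hp] [q Hq]; exists (PPair p q) => x; econstructor. Qed.

Lemma computable_const c : computable (fun _ => c).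
Proof.
elim: c => [|c IH]; last exact: computable_succ.
by exists PZero => x; constructor.
Qed.

Lemma computable_app2 (f : nat -> nat -> nat) g h :
  computable (fun w => f (nfst w) (nsnd w)) -> computable g -> computable h ->
  computable (fun x => f (g x) (h x)).
Proof.
move=> Hf Hg Hh; have := computable_comp Hf (computable_npair Hg Hh).
by apply: computable_ext => x; rewrite nfst_pair nsnd_pair.
Qed.

Fixpoint primrec (F G : nat -> nat) (a k : nat) : nat :=
  if k is k'.+1 then G (npair a (npair k' (primrec F G a k'))) else F a.

Lemma computable_primrec_npair F G : computable F -> computable G ->
  computable (fun x => primrec F G (nfst x) (nsnd x)).
Proof.
move=> [p Hp] [q Hq]; exists (PRec p q) => x.
suff H k a y : nunpair y = (a, k) -> peval (PRec p q) y (primrec F G a k).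
  by apply: H; case: (nunpair x).
elim: k a y => [|k IH] a y Ey /=; first exact: ev_rec0 Ey _.
by apply: ev_recS Ey _ _; [apply: IH; rewrite nunpair_npair|].
Qed.

Lemma primrec_param (F G : nat -> nat -> nat) c a k :
  primrec (F c) (G c) a k =
  primrec (fun w => F (nfst w) (nsnd w))
    (fun q => G (nfst (nfst q)) (npair (nsnd (nfst q)) (nsnd q))) (npair c a) k.
Proof. by elim: k => [|k IH] /=; rewrite ?IH !nfst_pair !nsnd_pair. Qed.

Lemma computable_primrec_param (F G : nat -> nat -> nat) C A K :
  computable (fun w => F (nfst w) (nsnd w)) ->
  computable (fun w => G (nfst w) (nsnd w)) ->
  computable C -> computable A -> computable K ->
  computable (fun x => primrec (F (C x)) (G (C x)) (A x) (K x)).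
Proof.
move=> HF HG HC HA HK.
have HG' : computable (fun q => G (nfst (nfst q)) (npair (nsnd (nfst q)) (nsnd q))).
  apply: (computable_app2 (f := G)) HG _ _.
    exact/computable_nfst/computable_nfst/computable_id.
  exact: computable_npair (computable_nsnd (computable_nfst computable_id))
    (computable_nsnd computable_id).
have := computable_comp (computable_primrec_npair HF HG')
  (computable_npair (computable_npair HC HA) HK).
by apply: computable_ext => x; rewrite nfst_pair nsnd_pair primrec_param.
Qed.

Lemma computable_primrec (F G : nat -> nat -> nat) A K :
  computable (fun w => F (nfst w) (nsnd w)) ->
  computable (fun w => G (nfst w) (nsnd w)) ->
  computable A -> computable K ->
  computable (fun x => primrec (F x) (G x) (A x) (K x)).
Proof. by move=> HF HG; apply: computable_primrec_param computable_id. Qed.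

Lemma computable_primrec0 (F G : nat -> nat) A K :
  computable F -> computable G -> computable A -> computable K ->
  computable (fun x => primrec F G (A x) (K x)).
Proof.
move=> HF HG; apply: (@computable_primrec (fun _ => F) (fun _ => G)).
  exact: computable_comp HF (computable_nsnd computable_id).
exact: computable_comp HG (computable_nsnd computable_id).
Qed.

Definition ifz (n a b : nat) := if n is 0 then a else b.

Lemma computable_ifz f g h : computable f -> computable g -> computable h ->
  computable (fun x => ifz (f x) (g x) (h x)).
Proof.
move=> Hf Hg Hh.
have := @computable_primrec_param (fun c _ => nfst c) (fun c _ => nsnd c)
  (fun x => npair (g x) (h x)) (fun _ => 0) f
  (computable_nfst (computable_nfst computable_id))
  (computable_nsnd (computable_nfst computable_id))
  (computable_npair Hg Hh) (computable_const 0) Hf.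
by apply: computable_ext => x; case: (f x) => [|k] /=; rewrite ?nfst_pair ?nsnd_pair.
Qed.

Notation nsnd2 q := (nsnd (nsnd q)).

Lemma computable_nsnd2 : computable (fun q => nsnd2 q).
Proof. exact/computable_nsnd/computable_nsnd/computable_id. Qed.

Lemma computable_predn f : computable f -> computable (fun x => (f x).-1).
Proof.
have HG : computable (fun q => nfst (nsnd q)).
  exact/computable_nfst/computable_nsnd/computable_id.
move=> /(computable_primrec0 (computable_const 0) HG (computable_const 0)).
by apply: computable_ext => x; case: (f x) => //= k; rewrite nsnd_pair nfst_pair.
Qed.

Lemma computable_add f g :
  computable f -> computable g -> computable (fun x => f x + g x).
Proof.
move=> Hf /(computable_primrec0 computable_id (computable_succ computable_nsnd2) Hf).
apply: computable_ext => x.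
by elim: (g x) => [|k IH] /=; rewrite ?addn0 ?nsnd_pair ?IH ?addnS.
Qed.

Lemma computable_sub f g :
  computable f -> computable g -> computable (fun x => f x - g x).
Proof.
move=> Hf /(computable_primrec0 computable_id (computable_predn computable_nsnd2) Hf).
apply: computable_ext => x.
by elim: (g x) => [|k IH] /=; rewrite ?subn0 ?nsnd_pair ?IH ?subnS.
Qed.

Lemma computable_mul f g :
  computable f -> computable g -> computable (fun x => f x * g x).
Proof.
have HG := computable_add (computable_nfst computable_id) computable_nsnd2.
move=> Hf /(computable_primrec0 (computable_const 0) HG Hf).
apply: computable_ext => x.
by elim: (g x) => [|k IH] /=; rewrite ?muln0 ?nfst_pair ?nsnd_pair ?IH ?mulnS.
Qed.

Lemma computable_exp2 f : computable f -> computable (fun x => 2 ^ f x).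
Proof.
have HG := computable_add computable_nsnd2 computable_nsnd2.
move=> /(computable_primrec0 (computable_const 1) HG (computable_const 0)).
apply: computable_ext => x.
by elim: (f x) => [|k IH] /=; rewrite ?nsnd_pair ?IH ?expnS ?mul2n ?addnn.
Qed.

Definition computable_pred (P : nat -> bool) := computable (fun x => nat_of_bool (P x)).

Lemma computable_eqb f g :
  computable f -> computable g -> computable_pred (fun x => f x == g x).
Proof.
move=> Hf Hg.
have := computable_ifz (computable_add (computable_sub Hf Hg) (computable_sub Hg Hf))
  (computable_const 1) (computable_const 0).
apply: computable_ext => x; rewrite /ifz.
case: eqP => [->|ne]; first by rewrite subnn.
by case E: (_ + _) => //; case: ne; lia.
Qed.

Lemma computable_leqb f g :
  computable f -> computable g -> computable_pred (fun x => f x <= g x).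
Proof.
move=> Hf Hg.
have := computable_ifz (computable_sub Hf Hg) (computable_const 1) (computable_const 0).
by apply: computable_ext => x; rewrite /ifz -subn_eq0; case: (f x - g x).
Qed.

Lemma computable_andb f g :
  computable_pred f -> computable_pred g -> computable_pred (fun x => f x && g x).
Proof.
move=> Hf Hg; have := computable_ifz Hf (computable_const 0) Hg.
by apply: computable_ext => x; case: (f x).
Qed.

Lemma computable_orb f g :
  computable_pred f -> computable_pred g -> computable_pred (fun x => f x || g x).
Proof.
move=> Hf Hg; have := computable_ifz Hf Hg (computable_const 1).
by apply: computable_ext => x; case: (f x).
Qed.

Lemma computable_negb f : computable_pred f -> computable_pred (fun x => ~~ f x).
Proof.
move=> Hf; have := computable_ifz Hf (computable_const 1) (computable_const 0).
by apply: computable_ext => x; case: (f x).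
Qed.

Definition bif (b : bool) (u v : nat) := if b then u else v.

Lemma computable_bif (b : nat -> bool) u v : computable_pred b ->
  computable u -> computable v -> computable (fun x => bif (b x) (u x) (v x)).
Proof.
move=> Hb Hu Hv; have := computable_ifz Hb Hv Hu.
by apply: computable_ext => x; case: (b x).
Qed.

Lemma computable_app2b (P : nat -> nat -> bool) g h :
  computable_pred (fun w => P (nfst w) (nsnd w)) -> computable g -> computable h ->
  computable_pred (fun x => P (g x) (h x)).
Proof. exact: (computable_app2 (f := fun a b => nat_of_bool (P a b))). Qed.

Fixpoint bex_lt (P : nat -> bool) (n : nat) : bool :=
  if n is n'.+1 then bex_lt P n' || P n' else false.

Definition ball_lt (P : nat -> bool) (n : nat) : bool :=
  ~~ bex_lt (fun i => ~~ P i) n.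

Lemma bex_ltP (P : nat -> bool) n : reflect (exists2 i, i < n & P i) (bex_lt P n).
Proof.
elim: n => [|n IH] /=; first by constructor => -[].
apply: (iffP orP) => [[/IH [i ??]|Pn]|[i]]; first by exists i => //; apply: ltnW.
  by exists n.
rewrite ltnS leq_eqVlt => /orP [/eqP->|Hi] Pi; first by right.
by left; apply/IH; exists i.
Qed.

Lemma ball_ltP (P : nat -> bool) n : reflect (forall i, i < n -> P i) (ball_lt P n).
Proof.
apply: (iffP negP) => [H i Hi|H /bex_ltP [i Hi]]; last by rewrite H.
by apply/negPn/negP => nP; apply: H; apply/bex_ltP; exists i.
Qed.

Lemma computable_bex_lt (P : nat -> nat -> bool) B :
  computable_pred (fun w => P (nfst w) (nsnd w)) -> computable B ->
  computable_pred (fun x => bex_lt (P x) (B x)).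
Proof.
move=> HP HB.
have HG : computable_pred (fun w => (nsnd2 (nsnd w) != 0) || P (nfst w) (nfst (nsnd2 w))).
  apply: computable_orb.
    exact/computable_negb/computable_eqb/computable_const/computable_nsnd/computable_nsnd2.
  apply: computable_app2b HP _ _; first exact/computable_nfst/computable_id.
  exact/computable_nfst/computable_nsnd2.
have := @computable_primrec (fun _ _ => 0)
  (fun c q => nat_of_bool ((nsnd2 q != 0) || P c (nfst (nsnd q))))
  (fun _ => 0) B (computable_const 0) HG (computable_const 0) HB.
apply: computable_ext => x; elim: (B x) => [|k IH] //=.
by rewrite !nsnd_pair nfst_pair IH; case: (bex_lt (P x) k).
Qed.

Lemma computable_ball_lt (P : nat -> nat -> bool) B :
  computable_pred (fun w => P (nfst w) (nsnd w)) -> computable B ->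
  computable_pred (fun x => ball_lt (P x) (B x)).
Proof.
move=> HP HB; apply: computable_negb.
exact: (@computable_bex_lt (fun a b => ~~ P a b) B (computable_negb HP) HB).
Qed.

(** * A clocked interpreter *)

(* Results are coded as [y.+1] for output [y] and [0] for "no output yet". A
   [mu_state] is [1] while the search goes on, [0] once it meets an undefined
   value and [v.+2] once it has found the witness [v]. *)
Definition rec_step (eg : nat -> nat) (q : nat) : nat :=
  ifz (nsnd2 q) 0 (eg (npair (nfst q) (npair (nfst (nsnd q)) (nsnd2 q).-1))).

Definition mu_step (ef : nat -> nat) (q : nat) : nat :=
  bif (nsnd2 q == 1)
    (ifz (ef (npair (nfst q) (nfst (nsnd q)))) 0
        (ifz (ef (npair (nfst q) (nfst (nsnd q)))).-1 (nfst (nsnd q)).+2 1))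
    (nsnd2 q).

Definition mu_state (ef : nat -> nat) (x k : nat) :=
  primrec (fun _ => 1) (mu_step ef) x k.

Definition mu_result (s : nat) := ifz s 0 (ifz s.-1 0 s.-1).

(* The fuel [n] only bounds the length of the unbounded searches [PMu]. *)
Fixpoint evalf (n : nat) (p : prf) (x : nat) : nat :=
  match p with
  | PZero => 1
  | PSucc => x.+2
  | PId => x.+1
  | PFst => (nfst x).+1
  | PSnd => (nsnd x).+1
  | PComp f g => ifz (evalf n g x) 0 (evalf n f (evalf n g x).-1)
  | PPair f g =>
      ifz (evalf n f x) 0 (ifz (evalf n g x) 0 (npair (evalf n f x).-1 (evalf n g x).-1).+1)
  | PRec f g => primrec (evalf n f) (rec_step (evalf n g)) (nfst x) (nsnd x)
  | PMu f => mu_result (mu_state (evalf n f) x n)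
  end.

Lemma computable_evalf_app p a b :
  computable (fun w => evalf (nsnd w) p (nfst w)) ->
  computable a -> computable b -> computable (fun x => evalf (b x) p (a x)).
Proof. exact: (computable_app2 (f := fun y n => evalf n p y)). Qed.

Ltac computable_step := match goal with
  | |- computable (fun x => x) => exact computable_id
  | |- computable (fun x => ?c) => exact (computable_const c)
  | |- computable (fun x => evalf (@?b x) ?p (@?a x)) =>
      apply: (@computable_evalf_app p a b); [eassumption| |]
  | |- computable (fun x => nfst (@?f x)) => apply: (@computable_nfst f)
  | |- computable (fun x => nsnd (@?f x)) => apply: (@computable_nsnd f)
  | |- computable (fun x => S (@?f x)) => apply: (@computable_succ f)
  | |- computable (fun x => predn (@?f x)) => apply: (@computable_predn f)
  | |- computable (fun x => npair (@?f x) (@?g x)) => apply: (@computable_npair f g)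
  | |- computable (fun x => addn (@?f x) (@?g x)) => apply: (@computable_add f g)
  | |- computable (fun x => subn (@?f x) (@?g x)) => apply: (@computable_sub f g)
  | |- computable (fun x => muln (@?f x) (@?g x)) => apply: (@computable_mul f g)
  | |- computable (fun x => expn 2 (@?f x)) => apply: (@computable_exp2 f)
  | |- computable (fun x => ifz (@?f x) (@?g x) (@?h x)) => apply: (@computable_ifz f g h)
  | |- computable (fun x => bif (@?b x) (@?u x) (@?v x)) => apply: (@computable_bif b u v)
  | |- computable_pred (fun x => @eq_op _ (@?f x) (@?g x)) => apply: (@computable_eqb f g)
  | |- computable_pred (fun x => leq (@?f x) (@?g x)) => apply: (@computable_leqb f g)
  | |- computable_pred (fun x => andb (@?f x) (@?g x)) => apply: (@computable_andb f g)
  | |- computable_pred (fun x => orb (@?f x) (@?g x)) => apply: (@computable_orb f g)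
  | |- computable_pred (fun x => negb (@?f x)) => apply: (@computable_negb f)
  | |- computable_pred (fun x => bex_lt (fun i => @?P x i) (@?B x)) =>
      apply: (@computable_bex_lt P B); cbv beta
  | |- computable_pred (fun x => ball_lt (fun i => @?P x i) (@?B x)) =>
      apply: (@computable_ball_lt P B); cbv beta
  | H : computable_pred (fun w => ?Q (nfst w) (nsnd w)) |-
      computable_pred (fun x => ?Q (@?f x) (@?g x)) =>
      apply: (@computable_app2b Q f g H)
  end.

Ltac solve_computable := repeat computable_step.

Lemma computable_evalf p : computable (fun w => evalf (nsnd w) p (nfst w)).
Proof.
elim: p => [||||| f IHf g IHg | f IHf g IHg | f IHf g IHg | f IHf] /=;
  try by solve_computable.
- apply: (@computable_primrec (fun c a => evalf (nsnd c) f a)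
    (fun c q => rec_step (evalf (nsnd c) g) q)); rewrite /rec_step; solve_computable.
- have Hstate : computable (fun w => mu_state (evalf (nsnd w) f) (nfst w) (nsnd w)).
    rewrite /mu_state.
    apply: (@computable_primrec (fun _ _ => 1) (fun c q => mu_step (evalf (nsnd c) f) q));
      rewrite /mu_step; solve_computable.
  have Hpred := computable_predn Hstate.
  exact: computable_ifz Hstate (computable_const 0)
    (computable_ifz Hpred (computable_const 0) Hpred).
Qed.

Lemma mu_stateS ef x i : mu_state ef x i.+1 =
  bif (mu_state ef x i == 1)
    (ifz (ef (npair x i)) 0 (ifz (ef (npair x i)).-1 i.+2 1)) (mu_state ef x i).
Proof. by rewrite /mu_state /= /mu_step ?(nfst_pair, nsnd_pair). Qed.

Lemma mu_state_inv ef x i :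
  (mu_state ef x i = 1 -> forall m, m < i -> exists k, ef (npair x m) = k.+2) /\
  (forall v, mu_state ef x i = v.+2 -> ef (npair x v) = 1 /\
      forall m, m < v -> exists k, ef (npair x m) = k.+2).
Proof.
elim: i => [|i [IH1 IH2]]; first by split => // v.
rewrite mu_stateS /bif; case: eqP => [E|NE]; last by split => // /NE.
case R: (ef (npair x i)) => [|[|k]] /=; first by split.
  by split => // v [<-]; split => //; exact: IH1.
split => // _ m; rewrite ltnS leq_eqVlt => /orP [/eqP ->|Hm]; first by exists k.
exact: IH1.
Qed.

Lemma mu_state_stable ef x i j :
  mu_state ef x i != 1 -> mu_state ef x (i + j) = mu_state ef x i.
Proof.
move=> H; elim: j => [|j IH]; first by rewrite addn0.
by rewrite addnS mu_stateS IH /bif (negbTE H).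
Qed.

Lemma mu_state_found ef x n :
  (forall m, m < n -> exists k, ef (npair x m) = k.+2) -> ef (npair x n) = 1 ->
  forall N, n < N -> mu_state ef x N = n.+2.
Proof.
move=> Hlt Hn N /subnKC <-.
have searching i : i <= n -> mu_state ef x i = 1.
  elim: i => [|i IHi] // Hi.
  have [k Hk] := Hlt i Hi.
  by rewrite mu_stateS IHi ?(ltnW Hi) //= Hk.
have found : mu_state ef x n.+1 = n.+2 by rewrite mu_stateS searching //= Hn.
by rewrite mu_state_stable found.
Qed.

Lemma evalf_sound p n x y : evalf n p x = y.+1 -> peval p x y.
Proof.
elim: p x y => [||||| f IHf g IHg | f IHf g IHg | f IHf g IHg | f IHf] x y /=;
  try by case=> <-; constructor.
- by case R: (evalf n g x) => [|r] //= E; apply: ev_comp (IHg _ _ R) (IHf _ _ E).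
- case R1: (evalf n f x) => [|r1] //=; case R2: (evalf n g x) => [|r2] //= [<-].
  exact: ev_pair (IHf _ _ R1) (IHg _ _ R2).
- suff H k a z w : nunpair z = (a, k) ->
      primrec (evalf n f) (rec_step (evalf n g)) a k = w.+1 -> peval (PRec f g) z w.
    by apply: H; case: (nunpair x).
  elim: k a z w => [|k IH] a z w Ez /=; first by move/IHf; apply: ev_rec0 Ez.
  rewrite /rec_step !nsnd_pair nfst_pair.
  case R: (primrec _ _ a k) => [|s] //=; rewrite nfst_pair => /IHg Hg.
  by apply: ev_recS Ez _ Hg; apply: (IH a) R; rewrite nunpair_npair.
- rewrite /mu_result; case R: (mu_state (evalf n f) x n) => [|[|s]] //= [<-].
  have [H1 H2] := (mu_state_inv (evalf n f) x n).2 _ R.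
  apply: ev_mu; first exact: IHf H1.
  by move=> m /H2 [k Hk]; exists k; apply: IHf.
Qed.

Lemma mu_state_mono ef ef' x i :
  (forall z y, ef z = y.+1 -> ef' z = y.+1) ->
  mu_state ef x i != 0 -> mu_state ef' x i = mu_state ef x i.
Proof.
move=> Hef; elim: i => [|i IH] //; rewrite !mu_stateS.
case E0: (mu_state ef x i) => [|[|s]] //=; rewrite IH ?E0 //=.
by case R: (ef (npair x i)) => [|r] //=; rewrite (Hef _ _ R).
Qed.

Lemma evalf_mono p n n' x y : n <= n' -> evalf n p x = y.+1 -> evalf n' p x = y.+1.
Proof.
move=> Hn; elim: p x y => [||||| f IHf g IHg | f IHf g IHg | f IHf g IHg | f IHf] x y //=.
- by case R: (evalf n g x) => [|r] //= E; rewrite (IHg _ _ R) /= (IHf _ _ E).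
- case R1: (evalf n f x) => [|r1] //=; case R2: (evalf n g x) => [|r2] //= E.
  by rewrite (IHf _ _ R1) (IHg _ _ R2).
- elim: (nsnd x) y => [|k IH] z /=; first exact: IHf.
  rewrite /rec_step !nsnd_pair nfst_pair.
  case R: (primrec _ _ _ k) => [|s] //=; rewrite (IH s R) /= !nfst_pair.
  exact: IHg.
- rewrite /mu_result; case R: (mu_state (evalf n f) x n) => [|[|s]] //= [<-].
  have E1 : mu_state (evalf n' f) x n = s.+2 by rewrite (mu_state_mono IHf) R.
  by have := @mu_state_stable (evalf n' f) x n (n' - n); rewrite subnKC // E1 => ->.
Qed.

Lemma fuel_bound_lt f x n :
  (forall m, m < n -> exists N k, evalf N f (npair x m) = k.+2) ->
  exists N, forall m, m < n -> exists k, evalf N f (npair x m) = k.+2.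
Proof.
elim: n => [|n IH] H; first by exists 0.
have [N1 H1] := IH (fun m Hm => H m (ltnW Hm)).
have [N2 [k2 H2]] := H n (ltnSn n).
exists (maxn N1 N2) => m; rewrite ltnS leq_eqVlt => /orP [/eqP ->|Hm].
  by exists k2; apply: evalf_mono H2; exact: leq_maxr.
by have [k Hk] := H1 m Hm; exists k; apply: evalf_mono Hk; exact: leq_maxl.
Qed.

Lemma evalf_mu_complete f x n N0 :
  evalf N0 f (npair x n) = 1 ->
  (forall m, m < n -> exists N k, evalf N f (npair x m) = k.+2) ->
  exists N, evalf N (PMu f) x = n.+1.
Proof.
move=> E0 /fuel_bound_lt [N1 H1].
pose N := maxn (maxn N0 N1) n.+1.
exists N; rewrite /= (@mu_state_found _ _ n) ?leq_maxr //.
  by move=> m /H1 [k Hk]; exists k; apply: evalf_mono Hk; rewrite leq_max leq_maxr.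
by apply: evalf_mono E0; rewrite leq_max leq_maxl.
Qed.

Lemma evalf_complete p x y : peval p x y -> exists n, evalf n p x = y.+1.
Proof.
(* [peval_ind] gives no induction hypothesis for the derivations hidden under
   the quantifier in the premise of [ev_mu], hence the explicit fixpoint. *)
move: p x y; fix IH 4 => p x y H; case: H => {p x y}; try by exists 0.
- move=> f g x y z /IH [n1 E1] /IH [n2 E2]; exists (maxn n1 n2) => /=.
  by rewrite (evalf_mono (leq_maxl n1 n2) E1) /= (evalf_mono (leq_maxr n1 n2) E2).
- move=> f g x y z /IH [n1 E1] /IH [n2 E2]; exists (maxn n1 n2) => /=.
  by rewrite (evalf_mono (leq_maxl n1 n2) E1) (evalf_mono (leq_maxr n1 n2) E2).
- by move=> f g x a y Ex /IH [n E]; exists n => /=; rewrite Ex.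
- move=> f g x a k y z Ex /IH [n1 E1] /IH [n2 E2]; exists (maxn n1 n2) => /=.
  rewrite Ex /=; have := evalf_mono (leq_maxl n1 n2) E1.
  rewrite /= !nfst_pair !nsnd_pair => ->.
  by rewrite /rec_step !nsnd_pair !nfst_pair /=; apply: evalf_mono (leq_maxr n1 n2) E2.
- move=> f x n /IH [N0 E0] Hlt; apply: evalf_mu_complete E0 _ => m /Hlt [k /IH [N HN]].
  by exists N, k.
Qed.

Lemma peval_det p x y y' : peval p x y -> peval p x y' -> y = y'.
Proof.
move=> /evalf_complete [n1 E1] /evalf_complete [n2 E2].
have := evalf_mono (leq_maxl n1 n2) E1.
by rewrite (evalf_mono (leq_maxr n1 n2) E2) => -[].
Qed.

(** * Codes of binary strings *)

Lemma scode_cat s t : scode (s ++ t) = scode s + 2 ^ size s * scode t.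
Proof.
elim: s => [|b s IH] /=; first by rewrite mul1n.
by rewrite IH expnS doubleD -!muln2; case: b; lia.
Qed.

Lemma scode_bounds s : 2 ^ size s <= (scode s).+1 /\ (scode s).+2 <= 2 ^ (size s).+1.
Proof.
by elim: s => [|b s [IH1 IH2]] //=; rewrite !expnS -!muln2 in IH2 *; case: b; lia.
Qed.

Lemma scode_inj : injective scode.
Proof.
elim=> [|b s IH] [|b' s'] //=; rewrite -?muln2; [by case: b'; lia|by case: b; lia|].
move=> E; have Eb : b = b' by move: E; case: b; case: b' => //; lia.
by subst b'; congr (_ :: _); apply: IH; move: E; case: b; lia.
Qed.

Lemma scode_surj n : exists s, scode s = n.
Proof.
elim/ltn_ind: n => -[|n] IH; first by exists [::].
have [s Hs] := IH n./2 ltac:(by rewrite ltn_half_double -muln2; lia).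
exists (odd n :: s) => /=; rewrite Hs -muln2.
by have := odd_double_half n; case: (odd n) => /=; lia.
Qed.

Lemma size_le_scode s : size s <= scode s.
Proof.
have [H _] := scode_bounds s.
by have := ltn_expl (size s) (ltnSn 1); lia.
Qed.

Lemma scode_prefix_le s t : prefix s t -> scode s <= scode t.
Proof. by move=> /prefixP [u ->]; rewrite scode_cat leq_addr. Qed.

Lemma scode_prefix_lt s t : prefix s t -> s != t -> scode s < scode t.
Proof.
move=> /prefixP [[|b u] ->]; first by rewrite cats0 eqxx.
rewrite scode_cat /= => _; have := expn_gt0 2 (size s).
by rewrite -muln2; case: b => /=; nia.
Qed.

Lemma exp2_bracket_uniq L L' d :
  2 ^ L <= d.+1 -> d.+2 <= 2 ^ L.+1 -> 2 ^ L' <= d.+1 -> d.+2 <= 2 ^ L'.+1 -> L = L'.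
Proof.
move=> h1 h2 h3 h4.
have : L < L'.+1 by rewrite -(ltn_exp2l _ _ (ltnSn 1)); lia.
have : L' < L.+1 by rewrite -(ltn_exp2l _ _ (ltnSn 1)); lia.
by rewrite !ltnS => ? ?; apply/eqP; rewrite eqn_leq; apply/andP.
Qed.

Definition prefixc (d c : nat) : bool :=
  bex_lt (fun L => bex_lt (fun r =>
    (c == d + 2 ^ L * r) && (2 ^ L <= d.+1) && (d.+2 <= 2 ^ L.+1)) c.+1) c.+1.

Lemma prefixcP s t : prefixc (scode s) (scode t) = prefix s t.
Proof.
have [h3 h4] := scode_bounds s.
apply/idP/idP.
  move=> /bex_ltP [L _ /bex_ltP [r _ /andP [/andP [/eqP E h1] h2]]].
  have [u Hu] := scode_surj r.
  move: E; rewrite (exp2_bracket_uniq h1 h2 h3 h4) -Hu -scode_cat => /scode_inj ->.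
  exact: prefix_prefix.
move=> Hp; have /prefixP [u Eu] := Hp.
apply/bex_ltP; exists (size s).
  by rewrite ltnS (leq_trans (size_prefix Hp)) ?size_le_scode.
apply/bex_ltP; exists (scode u); last by rewrite Eu scode_cat eqxx h3 h4.
by rewrite ltnS Eu scode_cat; have := expn_gt0 2 (size s); nia.
Qed.

Lemma computable_prefixc : computable_pred (fun w => prefixc (nfst w) (nsnd w)).
Proof. by rewrite /prefixc; solve_computable. Qed.

Lemma ce_of_decidable (P : nat -> bool) : computable_pred P ->
  exists q, forall z, (exists y, peval q z y) <-> P z.
Proof.
move=> HP.
have [pg Hg] : computable (fun w => 1 - nat_of_bool (P (nfst w))).
  exact: computable_sub (computable_const 1)
    (computable_comp HP (computable_nfst computable_id)).
exists (PMu pg) => z; split.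
  move=> [y Hy]; inversion Hy as [ | | | | | | | | | ? ? ? Hy0 _]; subst.
  by have := peval_det Hy0 (Hg (npair z y)); rewrite nfst_pair; case: (P z).
move=> Pz; exists 0; apply: ev_mu => //.
by have := Hg (npair z 0); rewrite nfst_pair Pz.
Qed.

(** * A prefix-free refinement of a Σ^0_1 test *)

(* With [p] enumerating [U], [enters_all p m c] says that for every [k <= m]
   the string coded by [c] extends a string of [U k] whose enumeration halts
   within [c] steps; [min_enters p m c] adds that this string has length at
   least [m] and that none of its proper prefixes of length at least [m] has
   the same property. Bounding the search by the code makes both decidable. *)
Definition enters_all (p : prf) (m c : nat) : bool :=
  ball_lt (fun k => bex_lt (fun d => prefixc d c && (evalf c p (npair k d) != 0)) c.+1) m.+1.

Definition min_enters (p : prf) (m c : nat) : bool :=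
  (2 ^ m <= c) && enters_all p m c &&
  ~~ bex_lt (fun d => prefixc d c && (d != c) && (2 ^ m <= d) && enters_all p m d) c.

Lemma computable_enters_all p :
  computable_pred (fun w => enters_all p (nfst w) (nsnd w)).
Proof.
have := computable_evalf p; have := computable_prefixc.
by rewrite /enters_all => ? ?; solve_computable.
Qed.

Lemma computable_min_enters p :
  computable_pred (fun w => min_enters p (nfst w) (nsnd w)).
Proof.
have := computable_enters_all p; have := computable_prefixc.
by rewrite /min_enters => ? ?; solve_computable.
Qed.

Definition initseg (X : cantor) (n : nat) : seq bool := mkseq X n.

Lemma initseg_prefix X a b : a <= b -> prefix (initseg X a) (initseg X b).
Proof.
move=> Hab; rewrite prefixE size_mkseq; apply/eqP.
apply: (@eq_from_nth _ false); rewrite ?size_takel ?size_mkseq // => i Hi.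
by rewrite nth_take // !nth_mkseq // (leq_trans Hi Hab).
Qed.

Lemma prefix_initseg X n s : prefix s (initseg X n) -> s = initseg X (size s).
Proof.
move=> H; have Hs := size_prefix H; rewrite size_mkseq in Hs.
move: H; rewrite prefixE => /eqP <-.
apply: (@eq_from_nth _ false); rewrite ?size_takel ?size_mkseq // => i Hi.
by rewrite nth_take // !nth_mkseq // (leq_trans Hi Hs).
Qed.

Lemma cyl_initseg X s : cyl s X -> s = initseg X (size s).
Proof.
move=> H; apply: (@eq_from_nth _ false); rewrite ?size_mkseq // => i Hi.
by rewrite nth_mkseq // H.
Qed.

Lemma initseg_cyl X n : cyl (initseg X n) X.
Proof. by move=> i; rewrite size_mkseq => Hi; rewrite nth_mkseq. Qed.

Lemma cyl_prefix s t X : prefix s t -> cyl t X -> cyl s X.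
Proof.
move=> /prefixP [u ->] H i Hi; rewrite H ?size_cat ?nth_cat ?Hi //.
exact: leq_trans Hi (leq_addr _ _).
Qed.

Lemma eventually_forall_le (Q : nat -> nat -> Prop) m :
  (forall k, k <= m -> exists L, forall L', L <= L' -> Q k L') ->
  exists L, forall L', L <= L' -> forall k, k <= m -> Q k L'.
Proof.
elim: m => [|m IH] H.
  have [L HL] := H 0 (leqnn 0).
  by exists L => L' HL' k; rewrite leqn0 => /eqP ->; apply: HL.
have [L1 H1] := IH (fun k Hk => H k (leqW Hk)).
have [L2 H2] := H m.+1 (leqnn _).
exists (maxn L1 L2) => L' HL' k; rewrite leq_eqVlt => /orP [/eqP ->|Hk].
  by apply: H2; exact: leq_trans (leq_maxr _ _) HL'.
by apply: H1 => //; exact: leq_trans (leq_maxl _ _) HL'.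
Qed.

Section Refinement.
Variables (p : prf) (U : nat -> set (seq bool)).
Hypothesis HU : forall i s, U i s <-> exists y, peval p (npair i (scode s)) y.

Definition refinement m (t : seq bool) : Prop := min_enters p m (scode t).

Lemma refinement_ce : unif_ce refinement.
Proof.
have [q Hq] := ce_of_decidable (computable_min_enters p).
by exists q => i s; rewrite Hq nfst_pair nsnd_pair.
Qed.

Lemma enters_allP m t :
  enters_all p m (scode t) -> forall k, k <= m -> exists2 s, prefix s t & U k s.
Proof.
move=> /ball_ltP H k Hk; have /bex_ltP [d _ /andP [Hd Hev]] := H k Hk.
have [s Es] := scode_surj d; subst d.
exists s; first by rewrite -prefixcP.
apply/HU; move: Hev; case E: (evalf _ _ _) => [|y] // _.
by exists y; apply: evalf_sound E.
Qed.

Lemma refinement_size m t : refinement m t -> m <= size t.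
Proof.
move=> /andP [/andP [H _] _]; have [_ h2] := scode_bounds t.
by rewrite -ltnS -(ltn_exp2l _ _ (ltnSn 1)); lia.
Qed.

Lemma refinement_sub m t k X : refinement m t -> k <= m -> cyl t X -> cylS (U k) X.
Proof.
move=> /andP [/andP [_ HS] _] Hk HX.
have [s Hs Us] := enters_allP HS Hk.
by exists s => //; apply: cyl_prefix Hs HX.
Qed.

Lemma refinement_antichain m t t' :
  refinement m t -> refinement m t' -> prefix t t' -> t = t'.
Proof.
move=> /andP [/andP [H1 H2] _] /andP [_ /negP H3] Hp.
apply/eqP; apply/negPn/negP => Hne; apply: H3.
apply/bex_ltP; exists (scode t); first exact: scode_prefix_lt.
by rewrite prefixcP Hp H1 H2 /= !andbT (inj_eq scode_inj).
Qed.

Lemma enters_all_initseg m X : (forall k, k <= m -> cylS (U k) X) ->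
  exists L, (2 ^ m <= scode (initseg X L)) && enters_all p m (scode (initseg X L)).
Proof.
move=> HX.
have [L0 HL0] : exists L, forall L', L <= L' -> forall k, k <= m ->
    exists2 s, prefix s (initseg X L') &
      exists2 n, n <= scode (initseg X L') & evalf n p (npair k (scode s)) != 0.
  apply: eventually_forall_le => k Hk.
  have [s Us Xs] := HX k Hk; have [y /evalf_complete [n En]] := (HU k s).1 Us.
  exists (maxn (size s) n) => L'; rewrite geq_max => /andP [Hs Hn].
  exists s; first by rewrite (cyl_initseg Xs); apply: initseg_prefix.
  exists n; last by rewrite En.
  by apply: leq_trans (size_le_scode _); rewrite size_mkseq.
exists (maxn L0 m.+1); apply/andP; split.
  have [h1 _] := scode_bounds (initseg X (maxn L0 m.+1)); rewrite size_mkseq in h1.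
  have : 2 ^ m < 2 ^ (maxn L0 m.+1) by rewrite ltn_exp2l // leq_maxr.
  lia.
apply/ball_ltP => k Hk; have [s Hs [n Hn Hev]] := HL0 _ (leq_maxl L0 m.+1) k Hk.
apply/bex_ltP; exists (scode s); first by rewrite ltnS scode_prefix_le.
rewrite prefixcP Hs /=; move: Hev; case E: (evalf _ _ _) => [|y] // _.
by rewrite (evalf_mono Hn E).
Qed.

Lemma refinement_cover m X : (forall k, k <= m -> cylS (U k) X) ->
  cylS (refinement m) X.
Proof.
move=> /enters_all_initseg HQ; case: (ex_minnP HQ) => L /andP [Q1 Q2] Lmin.
exists (initseg X L); last exact: initseg_cyl.
rewrite /refinement /min_enters Q1 Q2 /=.
apply/bex_ltP => -[d _ /andP [/andP [/andP [Hpre Hne] Hm] HS]].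
have [s Es] := scode_surj d; subst d; rewrite prefixcP in Hpre.
have Es := prefix_initseg Hpre.
have : size s < L.
  rewrite ltn_neqAle -{2}(size_mkseq X L) size_prefix // andbT.
  by apply: contra Hne => /eqP E; rewrite Es E.
by rewrite ltnNge => /negP; apply; apply: Lmin; rewrite -Es Hm HS.
Qed.

End Refinement.
(** * Measure-theoretic bounds *)

Local Open Scope classical_set_scope.
Local Open Scope ring_scope.

Lemma sum_tupleS (R : nmodType) a (F : (a.+1).-tuple bool -> R) :
  \sum_(t : (a.+1).-tuple bool) F t =
  \sum_(b : bool) \sum_(t : a.-tuple bool) F [tuple of b :: t].
Proof.
rewrite pair_big /= (reindex (fun p : bool * a.-tuple bool => [tuple of p.1 :: p.2])) //=.
exists (fun t : (a.+1).-tuple bool => (thead t, [tuple of behead t])) => [[b t]|t] _ /=.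
  by rewrite theadE; congr (_, _); apply: val_inj.
by rewrite [RHS]tuple_eta.
Qed.

Lemma sum_tuple0 (R : nmodType) (F : 0.-tuple bool -> R) :
  \sum_(t : 0.-tuple bool) F t = F [tuple].
Proof. by rewrite (big_pred1 [tuple]) // => t; apply/esym/eqP/tuple0. Qed.

Lemma cyl_measurable s : measurable (cyl s : set cantorB).
Proof. by apply: sub_sigma_algebra; exists s. Qed.

Lemma cylS_bigcup (U : set (seq bool)) :
  cylS U = \bigcup_(n in pickle @` U) cyl (odflt [::] (unpickle n)).
Proof.
apply/seteqP; split => X.
  by move=> [s Us Xs]; exists (pickle s); [exists s | rewrite pickleK].
by move=> [n [s Us <-]]; rewrite pickleK /= => Xs; exists s.
Qed.

Lemma cylS_measurable U : measurable (cylS U : set cantorB).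
Proof.
by rewrite cylS_bigcup; apply: bigcup_measurable => n _; apply: cyl_measurable.
Qed.

Lemma cyl_nil : cyl [::] = setT.
Proof. by apply/seteqP; split => X // _ i. Qed.

Lemma cyl_rcons s b X : cyl (rcons s b) X <-> cyl s X /\ X (size s) = b.
Proof.
split => [H|[H1 H2] i].
  split; last by rewrite H ?size_rcons // nth_rcons ltnn eqxx.
  by move=> i Hi; rewrite H ?size_rcons ?nth_rcons ?Hi // ltnW.
rewrite size_rcons ltnS leq_eqVlt => /orP [/eqP ->|Hi].
  by rewrite nth_rcons ltnn eqxx.
by rewrite nth_rcons Hi H1.
Qed.

Lemma cyl_split s : cyl s = cyl (rcons s false) `|` cyl (rcons s true).
Proof.
apply/seteqP; split => [X H|X [/cyl_rcons []|/cyl_rcons []] //].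
by case E: (X (size s)); [right|left]; apply/cyl_rcons.
Qed.

Lemma prefix_neq_rcons (s t : seq bool) :
  prefix s t -> s != t -> exists b, prefix (rcons s b) t.
Proof.
move=> /prefixP [[|b u] ->]; first by rewrite cats0 eqxx.
by move=> _; exists b; rewrite -cat_rcons prefix_prefix.
Qed.

Section FilteredSums.
Variables (R : numDomainType) (L : seq (seq bool)) (f : seq bool -> R).
Hypothesis f_ge0 : forall x, 0 <= f x.

Lemma sum_filter_le2 (P Q1 Q2 : pred (seq bool)) :
  (forall x, x \in L -> P x -> Q1 x || Q2 x) ->
  \sum_(x <- L | P x) f x <= \sum_(x <- L | Q1 x) f x + \sum_(x <- L | Q2 x) f x.
Proof.
move=> H; rewrite big_mkcond [X in _ <= X + _]big_mkcond.
rewrite [X in _ <= _ + X]big_mkcond -big_split /= big_seq [X in _ <= X]big_seq.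
apply: ler_sum => x Hx; case Px: (P x).
  by have := H x Hx Px; case: (Q1 x); case: (Q2 x) => //= _; rewrite ?addr0 ?add0r // lerDl.
by case: (Q1 x); case: (Q2 x); rewrite ?addr0 ?add0r ?addr_ge0.
Qed.

Lemma sum_filter0 (P : pred (seq bool)) :
  (forall x, x \in L -> ~~ P x) -> \sum_(x <- L | P x) f x = 0.
Proof.
move=> H; rewrite big_seq_cond big1 // => x /andP [Hx Px].
by rewrite (negbTE (H x Hx)) in Px.
Qed.

End FilteredSums.

Section SemiMeasureBounds.
Variables (R : realType) (rho : seq bool -> R).
Hypothesis hsm : semi_measure rho.
Variable mu : {measure set cantorB -> \bar R}.
Hypothesis hmu : forall s : seq bool, mu (cyl s) = (rho_bar rho s)%:E.

Lemma rho_ge0 s : 0 <= rho s. Proof. by case: hsm => /(_ s) /andP []. Qed.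

Lemma rho_split s : rho (rcons s false) + rho (rcons s true) <= rho s.
Proof. by case: hsm => _ []. Qed.

Fixpoint level_sum (a : nat) (s : seq bool) : R :=
  if a is a'.+1 then level_sum a' (rcons s false) + level_sum a' (rcons s true) else rho s.

Lemma level_sumE a s : level_sum a s = \sum_(t : a.-tuple bool) rho (s ++ t).
Proof.
elim: a s => [|a IH] s /=; first by rewrite sum_tuple0 /= cats0.
rewrite sum_tupleS big_bool /= !IH addrC.
by congr (_ + _); apply: eq_bigr => t _; rewrite cat_rcons.
Qed.

Lemma level_sum_ge0 a s : 0 <= level_sum a s.
Proof. by elim: a s => [|a IH] s /=; [apply: rho_ge0 | apply: addr_ge0]. Qed.

Lemma level_sumS_le a s : level_sum a.+1 s <= level_sum a s.
Proof.
elim: a s => [|a IH] s; first exact: rho_split.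
by rewrite [level_sum a.+2 s]/= [level_sum a.+1 s]/=; apply: lerD; apply: IH.
Qed.

Lemma level_sum_le a b s : (a <= b)%N -> level_sum b s <= level_sum a s.
Proof.
move=> /subnKC <-; elim: (b - a)%N => [|k IH]; first by rewrite addn0.
by rewrite addnS; apply: le_trans (level_sumS_le _ _) IH.
Qed.

Lemma rho_barE s : rho_bar rho s = inf [set level_sum k s | k in [set: nat]].
Proof.
rewrite /rho_bar; congr (inf _).
by apply/seteqP; split => x [k _ <-]; exists k => //; rewrite level_sumE.
Qed.

Lemma has_inf_level_sum s : has_inf [set level_sum k s | k in [set: nat]].
Proof.
split; first by exists (level_sum 0 s), 0%N.
by exists 0 => x [k _ <-]; apply: level_sum_ge0.
Qed.

Lemma rho_bar_le_level_sum s k : rho_bar rho s <= level_sum k s.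
Proof.
rewrite rho_barE; apply: ge_inf; first by case: (has_inf_level_sum s).
by exists k.
Qed.

Lemma rho_bar_le s : rho_bar rho s <= rho s.
Proof. exact: (rho_bar_le_level_sum s 0). Qed.

Lemma level_sum_cvg s : (fun m => level_sum m s) @ \oo --> rho_bar rho s.
Proof.
apply/cvgrPdist_le => e e0; have [_ [k _ <-] Hk] := inf_adherent e0 (has_inf_level_sum s).
exists k => // m /= Hm; rewrite distrC ger0_norm ?subr_ge0 ?rho_bar_le_level_sum //.
by rewrite lerBlDl rho_barE (le_trans (level_sum_le s Hm)) ?ltW.
Qed.

Section CutMass.
Variables (L : seq (seq bool)) (V : set cantorB).
Hypotheses (mV : measurable V) (LV : forall x, x \in L -> cyl x `<=` V).
Hypotheses (Luniq : uniq L) (Lanti : forall x y, x \in L -> y \in L -> prefix x y -> x = y).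

Fixpoint cut_mass (d : nat) (s : seq bool) : R :=
  if s \in L then rho s else
  if d is d'.+1 then cut_mass d' (rcons s false) + cut_mass d' (rcons s true) else rho s.

Lemma cut_mass_le_rho d s : cut_mass d s <= rho s.
Proof.
elim: d s => [|d IH] s /=; case: (s \in L) => //.
exact: le_trans (lerD (IH _) (IH _)) (rho_split s).
Qed.

Lemma cut_mass_le_level_sum a d s : (forall x, x \in L -> (size s + a <= size x)%N) ->
  (a <= d)%N -> cut_mass d s <= level_sum a s.
Proof.
elim: a d s => [|a IH] d s HL Had; first exact: cut_mass_le_rho.
case: d Had => // d Had /=.
have -> : (s \in L) = false.
  by apply/negbTE/negP => /HL; rewrite addnS -{2}(addn0 (size s)) ltn_add2l.
by apply: lerD; apply: IH => // x /HL; rewrite size_rcons addSn -addnS.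
Qed.

Lemma cylD_measurable s : measurable (cyl s `\` V : set cantorB).
Proof. exact: measurableD (cyl_measurable s) mV. Qed.

Lemma mu_cylD_le_rho s : (mu (cyl s `\` V) <= (rho s)%:E)%E.
Proof.
apply: le_trans (_ : mu (cyl s) <= _)%E; last by rewrite hmu lee_fin rho_bar_le.
by apply: le_measure; rewrite ?inE; [apply: cylD_measurable|apply: cyl_measurable|move=> X []].
Qed.

Lemma mu_cylD_mem s : s \in L -> mu (cyl s `\` V) = 0%E.
Proof. by move=> /LV sV; rewrite (_ : _ `\` _ = set0) ?measure0 // setD_eq0. Qed.

Lemma sum_prefix_mem s (P : pred (seq bool)) : s \in L -> P s ->
  \sum_(x <- L | prefix s x && P x) rho x = rho s.
Proof.
move=> sL Ps; rewrite (big_rem s) //= prefix_refl Ps /= sum_filter0 ?addr0 // => x Hx.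
apply/negP => /andP [Hp _]; have xL := mem_rem Hx.
by move: Hx; rewrite -(Lanti sL xL Hp) mem_rem_uniq // inE eqxx.
Qed.

Lemma cut_mass_ge d s :
  ((\sum_(x <- L | prefix s x && (size x <= size s + d)%N) rho x)%:E + mu (cyl s `\` V)
    <= (cut_mass d s)%:E)%E.
Proof.
elim: d s => [|d IH] s /=; case: ifP => sL.
- by rewrite sum_prefix_mem ?addn0 // mu_cylD_mem // adde0.
- rewrite sum_filter0 ?add0e ?mu_cylD_le_rho // => x Hx.
  apply/negP => /andP []; rewrite addn0 prefixE => /eqP Hp Hs.
  by move: Hp Hx; rewrite take_oversize // => ->; rewrite sL.
- by rewrite sum_prefix_mem ?leq_addr // mu_cylD_mem // adde0.
rewrite EFinD; apply: le_trans (leeD (IH _) (IH _)); rewrite addeACA; apply: leeD.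
  rewrite -EFinD lee_fin; apply: (sum_filter_le2 rho_ge0) => x Hx /andP [Hp Hs].
  have Hne : s != x by apply: contraFneq sL => ->.
  have [b Hb] := prefix_neq_rcons Hp Hne.
  by case: b Hb => Hb; rewrite Hb !size_rcons addSn -addnS Hs ?orbT.
rewrite {1}cyl_split setDUl.
by apply: measureU2; apply: cylD_measurable.
Qed.

End CutMass.

Lemma antichain_sum_bound (L : seq (seq bool)) (V : set cantorB) m :
  measurable V -> (forall x, x \in L -> cyl x `<=` V) -> uniq L ->
  (forall x y, x \in L -> y \in L -> prefix x y -> x = y) ->
  (forall x, x \in L -> (m <= size x)%N) ->
  ((\sum_(x <- L) rho x)%:E + mu (~` V) <= (level_sum m [::])%:E)%E.
Proof.
move=> mV LV Luniq Lanti Lsize; set d := (m + \sum_(x <- L) size x)%N.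
have -> : \sum_(x <- L) rho x =
    \sum_(x <- L | prefix [::] x && (size x <= size (@nil bool) + d)%N) rho x.
  rewrite big_seq [RHS]big_seq_cond; apply: eq_bigl => x.
  case Hx: (x \in L) => //=; rewrite prefix0s add0n.
  by apply/esym; rewrite (leq_trans _ (leq_addl m _)) // (big_rem x) //= leq_addr.
rewrite -setTD -cyl_nil; apply: le_trans (cut_mass_ge mV LV Luniq Lanti d [::]) _.
by rewrite lee_fin cut_mass_le_level_sum ?leq_addr.
Qed.

Lemma rho_set_antichain_le (S : set (seq bool)) (V : set cantorB) m :
  measurable V -> (forall x, S x -> cyl x `<=` V) ->
  (forall x y, S x -> S y -> prefix x y -> x = y) -> (forall x, S x -> (m <= size x)%N) ->
  (rho_set rho S <= (level_sum m [::] - rho_bar rho [::])%:E + mu V)%E.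
Proof.
move=> mV SV Santi Ssize.
have muT : (mu (~` V) + mu V)%E = (rho_bar rho [::])%:E.
  by rewrite -measureU ?setICl ?setvU -?cyl_nil //; [apply: hmu | apply: measurableC].
have : (mu (~` V) + mu V)%E \is a fin_num by rewrite muT.
rewrite fin_numD => /andP [fC fV].
have -> : (level_sum m [::] - rho_bar rho [::])%:E + mu V =
    (level_sum m [::] - fine (mu (~` V)))%:E.
  move: muT; rewrite -(fineK fC) -(fineK fV) -!EFinD => -[<-].
  by congr (_%:E); lra.
apply: ge_ereal_sup => /= _ [A [finA AS] <-].
rewrite fsbig_finite // sumEFin lee_fin lerBrDr -lee_fin EFinD fineK //.
apply: antichain_sum_bound => //.
- by move=> x; rewrite in_fset_set // inE => /AS; apply: SV.
- exact: finmap.fset_uniq.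
- by move=> x y; rewrite !in_fset_set // !inE => /AS Sx /AS Sy; apply: Santi.
- by move=> x; rewrite in_fset_set // inE => /AS; apply: Ssize.
Qed.

Lemma mu_cylS_le_rho_set (S : set (seq bool)) : (mu (cylS S) <= rho_set rho S)%E.
Proof.
rewrite cylS_bigcup bigcup_mkcond.
set P := pickle @` S.
set G := fun n => if n \in P then cyl (odflt [::] (unpickle n)) else set0.
have mG n : measurable (G n : set cantorB).
  by rewrite /G; case: ifP => _; [apply: cyl_measurable | apply: measurable0].
apply: (@le_trans _ _ (\sum_(n <oo) mu (G n))%E).
  by apply: measure_sigma_subadditive => //; apply: bigcupT_measurable.
set a := fun n => if n \in P then (rho (odflt [::] (unpickle n)))%:E else 0%E.
apply: (@le_trans _ _ (\sum_(n <oo) a n)%E).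
  apply: lee_nneseries => [n _ _|n _]; first exact: measure_ge0.
  rewrite /G /a; case: ifP => _; last by rewrite measure0.
  by rewrite hmu lee_fin rho_bar_le.
rewrite /a -eseries_mkcond nneseries_esum; last by move=> n _; rewrite lee_fin rho_ge0.
rewrite set_mem_set /P esum_image; last by move=> x y _ _; apply: (pcan_inj (@pickleK _)).
by apply: le_esum => i _; rewrite pickleK.
Qed.

End SemiMeasureBounds.

Section Equivalence.
Variables (R : realType) (rho : seq bool -> R).
Hypothesis hsm : semi_measure rho.
Variable mu : {measure set cantorB -> \bar R}.
Hypothesis hmu : forall s : seq bool, mu (cyl s) = (rho_bar rho s)%:E.

Lemma level_sum_excess_cvg0 :
  (fun m => (level_sum rho m [::] - rho_bar rho [::])%:E) @ \oo --> 0%E.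
Proof.
apply: cvg_EFin; first exact: nearW.
rewrite -(subrr (rho_bar rho [::])).
exact: cvgB (level_sum_cvg hsm (s := [::])) (cvg_cst (rho_bar rho [::])).
Qed.

Lemma blind_W2R_of_W2R X : W2R rho X -> blind_W2R mu X.
Proof.
move=> HW V [U [[p Hp] HV]] Hlim HX.
have mV m : measurable (V m : set cantorB) by rewrite HV; apply: cylS_measurable.
apply: (HW (refinement p)); first exact: refinement_ce.
  apply: (@squeeze_cvge _ _ _ _ (fun=> 0%E) _
    (fun m => (level_sum rho m [::] - rho_bar rho [::])%:E + mu (V m))%E); last 2 first.
  - exact: cvg_cst.
  - by rewrite -[0%E]adde0; apply: cvgeD level_sum_excess_cvg0 Hlim.
  apply: nearW => m; rewrite esum_ge0 => [|x _]; last by rewrite lee_fin rho_ge0.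
  apply: rho_set_antichain_le => // [x Ux Y HY|x y Ux Uy|x Ux].
  - by rewrite HV; apply: (refinement_sub Hp Ux (leqnn m) HY).
  - exact: refinement_antichain Ux Uy.
  - exact: refinement_size Ux.
by move=> m; apply: (refinement_cover Hp) => k _; rewrite -HV.
Qed.

Lemma W2R_of_blind_W2R X : blind_W2R mu X -> W2R rho X.
Proof.
move=> HB U HU Hlim; apply: (HB (fun i => cylS (U i))); first by exists U.
apply: (@squeeze_cvge _ _ _ _ (fun=> 0%E) _ (fun i => rho_set rho (U i))) => //.
  by apply: nearW => i; rewrite measure_ge0 mu_cylS_le_rho_set.
exact: cvg_cst.
Qed.

End Equivalence.

Unset Implicit Arguments.
Theorem theorem6p15 (R : realType) (rho : seq bool -> R)
  (hsm : semi_measure rho) (hlce : left_ce rho)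
  (mu : {measure set cantorB -> \bar R})
  (hmu : forall s : seq bool, mu (cyl s) = (rho_bar rho s)%:E)
  (X : cantor) :
  W2R rho X <-> blind_W2R mu X.
Proof. by split; [apply: blind_W2R_of_W2R | apply: W2R_of_blind_W2R]. Qed.
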